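(* Let $T$ be a binary phylogenetic tree with $n$ leaves. Then $\Phi(T)$ is minimum among all binary phylogenetic trees with $n$ leaves if and only if $T$ is maximally balanced.
   Context: A phylogenetic tree with $n$ leaves is a rooted tree whose leaves are bijectively labeled by $\{1,\dots,n\}$; binary means every internal node has exactly two children. $\kappa_T(v)$ is the number of leaves descending from node $v$. An internal node $v$ with children $v_1,v_2$ is balanced if $|\kappa_T(v_1)-\kappa_T(v_2)|\le 1$; $T$ is maximally balanced if all its internal nodes are balanced. The depth $\delta_T(v)$ is the number of arcs from the root to $v$; for leaves $i,j$, $\varphi_T(i,j)=\delta_T(LCA_T(i,j))$ ($LCA$ = lowest common ancestor), and $\Phi(T)=\sum_{1\le i<j\le n}\varphi_T(i,j)$. *)

From mathcomp Require Import all_boot.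
Set Implicit Arguments. Unset Strict Implicit. Unset Printing Implicit Defensive.

Inductive btree : Type :=
| Leaf of nat
| Node of btree & btree.

Fixpoint leaves (t : btree) : seq nat :=
  match t with
  | Leaf k => [:: k]
  | Node l r => leaves l ++ leaves r
  end.

(* kappa_T(v): number of leaves descending from the node v (the subtree). *)
Definition kappa (t : btree) : nat := size (leaves t).

Definition is_phylo (n : nat) (t : btree) : Prop :=
  perm_eq (leaves t) (iota 1 n).

Fixpoint lca_depth (t : btree) (i j : nat) : nat :=
  match t with
  | Leaf _ => 0
  | Node l r =>
      if (i \in leaves l) && (j \in leaves l) then (lca_depth l i j).+1
      else if (i \in leaves r) && (j \in leaves r) then (lca_depth r i j).+1
      else 0
  end.

Definition Phi (n : nat) (t : btree) : nat :=
  \sum_(1 <= j < n.+1) \sum_(1 <= i < j) lca_depth t i j.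

Fixpoint max_balanced (t : btree) : bool :=
  match t with
  | Leaf _ => true
  | Node l r =>
      [&& kappa l <= (kappa r).+1, kappa r <= (kappa l).+1,
          max_balanced l & max_balanced r]
  end.

(* Proof outline.
   1. Phi(T) equals cost T = sum over the non-root nodes v of C(kappa v, 2):
      a pair of leaves {i,j} contributes one unit for each non-root common
      ancestor of i and j, i.e. depth(LCA(i,j)).  We prove it through the
      ordered double sum of lca depths (pair_sum), which splits nicely at a
      node, and relate it to the triangular sum of Phi by symmetry.
   2. An explicit sequence opt n (with increments opt_incr, defined by
      opt_incr k = k/2 + opt_incr (k/2)) satisfies
        opt n = opt_child (n/2) + opt_child ((n+1)/2),
      where opt_child m = C(m,2) + opt m is strictly convex.
   3. For a strictly convex f, f a + f b exceeds f(floor((a+b)/2)) +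
      f(ceil((a+b)/2)) by at least 1 whenever |a - b| > 1.
   4. Hence, by induction on the tree, cost t >= opt (kappa t) with equality
      exactly for maximally balanced trees; since maximally balanced
      phylogenetic trees exist for every n > 0, the theorem follows. *)

From mathcomp Require Import all_boot zify.

Set Implicit Arguments.
Unset Strict Implicit.
Unset Printing Implicit Defensive.

Fixpoint cost (t : btree) : nat :=
  match t with
  | Leaf _ => 0
  | Node l r => 'C(kappa l, 2) + cost l + 'C(kappa r, 2) + cost r
  end.

Lemma kappa_node l r : kappa (Node l r) = kappa l + kappa r.
Proof. by rewrite /kappa /= size_cat. Qed.

Lemma kappa_gt0 t : 0 < kappa t.
Proof. by elim: t => //= l IHl r _; rewrite kappa_node ltn_addr. Qed.

Lemma lca_depthC t i j : lca_depth t i j = lca_depth t j i.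
Proof.
elim: t => [k|l IHl r IHr] //=.
by rewrite IHl IHr (andbC (j \in leaves l)) (andbC (j \in leaves r)).
Qed.

Definition pair_sum (t : btree) : nat :=
  \sum_(i <- leaves t) \sum_(j <- leaves t) lca_depth t i j.

Definition diag_sum (t : btree) : nat := \sum_(i <- leaves t) lca_depth t i i.

Section NodeDepths.
Variables l r : btree.
Hypothesis disj : forall x, x \in leaves r -> x \notin leaves l.

Lemma lca_node_left i j : i \in leaves l -> j \in leaves l ->
  lca_depth (Node l r) i j = (lca_depth l i j).+1.
Proof. by move=> il jl /=; rewrite il jl. Qed.

Lemma lca_node_right i j : i \in leaves r -> j \in leaves r ->
  lca_depth (Node l r) i j = (lca_depth r i j).+1.
Proof. by move=> ir jr /=; rewrite (negbTE (disj ir)) ir jr. Qed.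

Lemma lca_node_cross i j : i \in leaves l -> j \in leaves r ->
  lca_depth (Node l r) i j = 0 /\ lca_depth (Node l r) j i = 0.
Proof.
move=> il jr; have ir : i \notin leaves r by apply: contraL il => /disj.
by rewrite /= (negbTE (disj jr)) (negbTE ir) !andbF.
Qed.

Lemma row_sum_left i : i \in leaves l ->
  \sum_(j <- leaves l ++ leaves r) lca_depth (Node l r) i j =
  \sum_(j <- leaves l) lca_depth l i j + kappa l.
Proof.
move=> il; set d := lca_depth (Node l r) i.
have cross : \sum_(j <- leaves r) d j = 0.
  by rewrite big1_seq // => j /andP[_ jr]; case: (lca_node_cross il jr).
rewrite big_cat /= cross addn0 /kappa -sum1_size -big_split /=.
by apply: eq_big_seq => j jl; rewrite /d lca_node_left // addn1.
Qed.

Lemma row_sum_right i : i \in leaves r ->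
  \sum_(j <- leaves l ++ leaves r) lca_depth (Node l r) i j =
  \sum_(j <- leaves r) lca_depth r i j + kappa r.
Proof.
move=> ir; set d := lca_depth (Node l r) i.
have cross : \sum_(j <- leaves l) d j = 0.
  by rewrite big1_seq // => j /andP[_ jl]; case: (lca_node_cross jl ir).
rewrite big_cat /= cross add0n /kappa -sum1_size -big_split /=.
by apply: eq_big_seq => j jr; rewrite /d lca_node_right // addn1.
Qed.

Lemma pair_sum_node : pair_sum (Node l r) =
  pair_sum l + kappa l * kappa l + pair_sum r + kappa r * kappa r.
Proof.
rewrite /pair_sum [leaves (Node l r)]/= big_cat /=.
rewrite (eq_big_seq _ row_sum_left) (eq_big_seq _ row_sum_right).
by rewrite !big_split /= -!/(kappa _) !big_const_seq !count_predT !iter_addn_0 !addnA.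
Qed.

Lemma diag_sum_node : diag_sum (Node l r) =
  diag_sum l + kappa l + diag_sum r + kappa r.
Proof.
rewrite /diag_sum [leaves (Node l r)]/=; set d := lca_depth (Node l r).
rewrite big_cat /= /kappa -!sum1_size -addnA -!big_split /=.
congr (_ + _); apply: eq_big_seq => i i_in.
  by rewrite /d lca_node_left // addn1.
by rewrite /d lca_node_right // addn1.
Qed.

End NodeDepths.

Lemma bin2_double k : 'C(k, 2).*2 + k = k * k.
Proof. by elim: k => // k IHk; rewrite binS bin1; lia. Qed.

(* Since k^2 = 2 C(k,2) + k, the ordered pair sum is twice the cost plus the
   diagonal, when leaf labels are distinct. *)
Lemma pair_sum_cost t : uniq (leaves t) -> pair_sum t = (cost t).*2 + diag_sum t.
Proof.
elim: t => [k _|l IHl r IHr]; first by rewrite /pair_sum /diag_sum /= !big_seq1.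
rewrite [leaves _]/= cat_uniq => /and3P[ul /hasPn disj ur].
rewrite pair_sum_node ?diag_sum_node // IHl // IHr //=.
have := bin2_double (kappa l); have := bin2_double (kappa r); lia.
Qed.

Lemma sum_symmetric_pairs (f : nat -> nat -> nat) (n : nat) :
  (forall i j, f i j = f j i) ->
  \sum_(1 <= j < n.+1) \sum_(1 <= i < n.+1) f i j =
  (\sum_(1 <= j < n.+1) \sum_(1 <= i < j) f i j).*2 + \sum_(1 <= j < n.+1) f j j.
Proof.
move=> fC; elim: n => [|n IHn]; first by rewrite !big_geq.
have col_row : \sum_(1 <= i < n.+1) f i n.+1 = \sum_(1 <= i < n.+1) f n.+1 i.
  by apply: eq_bigr => i _; rewrite fC.
rewrite !(big_nat_recr n.+1) //= col_row.
rewrite (eq_bigr (fun j => \sum_(1 <= i < n.+1) f i j + f n.+1 j)); last first.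
  by move=> j _; rewrite big_nat_recr.
rewrite big_split /= IHn; lia.
Qed.

Lemma Phi_cost n t : is_phylo n t -> Phi n t = cost t.
Proof.
move=> phylo_t; have uniq_t : uniq (leaves t) by rewrite (perm_uniq phylo_t) iota_uniq.
have over_labels (G : nat -> nat) : \sum_(i <- iota 1 n) G i = \sum_(i <- leaves t) G i.
  by rewrite (perm_big _ phylo_t).
have := pair_sum_cost uniq_t; rewrite /pair_sum /diag_sum.
have := sum_symmetric_pairs n (lca_depthC t).
rewrite /Phi /index_iota subn1 /= !over_labels.
under eq_bigr => j _ do rewrite over_labels.
rewrite exchange_big /=; lia.
Qed.

Definition unbalanced (a b : nat) : bool := ~~ ((a <= b.+1) && (b <= a.+1)).

Section ConvexSplit.
Variable f : nat -> nat.
Hypothesis f_convex : forall a b, a < b -> f a.+1 + f b < f a + f b.+1.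

Lemma balanced_split_le a b :
  f ((a + b) %/ 2) + f ((a + b).+1 %/ 2) + unbalanced a b <= f a + f b.
Proof.
have near_split x y : x <= y <= x.+1 ->
    f ((x + y) %/ 2) + f ((x + y).+1 %/ 2) + unbalanced x y <= f x + f y.
  move=> /andP[le_xy le_yx]; rewrite /unbalanced le_yx (leq_trans le_xy) //.
  have -> : (x + y) %/ 2 = x by lia.
  have -> : (x + y).+1 %/ 2 = y by lia.
  by rewrite addn0.
wlog le_ab : a b / a <= b.
  move=> split_le; case: (leqP a b) => [|/ltnW] ab; first exact: split_le.
  by rewrite (addnC a b) [f a + _]addnC /unbalanced andbC; apply: split_le.
move: {2}(b - a) (leqnn (b - a)) => d; elim: d a b le_ab => [|d IHd] a b le_ab dist.
  by apply: near_split; lia.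
case: (leqP b a.+1) => [near | far]; first by apply: near_split; lia.
case: b far le_ab dist => [|b] far le_ab dist; first lia.
have := IHd a.+1 b ltac:(lia) ltac:(lia).
rewrite addSnnS; have := @f_convex a b ltac:(lia).
by have := leq_b1 (unbalanced a b.+1); lia.
Qed.

End ConvexSplit.

(* opt_incr k = k/2 + opt_incr (k/2), computed with fuel k (which suffices,
   since the argument halves at every step). *)
Fixpoint incr_fuel (fuel k : nat) : nat :=
  if fuel is fuel'.+1 then k %/ 2 + incr_fuel fuel' (k %/ 2) else 0.

Definition opt_incr (k : nat) : nat := incr_fuel k k.

Lemma incr_fuel0 fuel : incr_fuel fuel 0 = 0.
Proof. by elim: fuel => //= fuel ->; rewrite div0n. Qed.

Lemma incr_fuel_enough fuel1 fuel2 k : k <= fuel1 -> k <= fuel2 ->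
  incr_fuel fuel1 k = incr_fuel fuel2 k.
Proof.
elim: fuel1 fuel2 k => [|fuel1 IH] fuel2 k k1 k2.
  by move: k1; rewrite leqn0 => /eqP ->; rewrite !incr_fuel0.
case: fuel2 k2 => [|fuel2] k2.
  by move: k2; rewrite leqn0 => /eqP ->; rewrite !incr_fuel0.
by rewrite /= (IH fuel2) //; lia.
Qed.

Lemma opt_incr_unfold k : opt_incr k = k %/ 2 + opt_incr (k %/ 2).
Proof.
case: k => [|k]; first by [].
by rewrite /opt_incr /= (@incr_fuel_enough k (k.+1 %/ 2)) //; lia.
Qed.

(* opt_incr is nondecreasing; this yields strict convexity of opt_child. *)
Lemma opt_incr_mono : {homo opt_incr : m n / m <= n}.
Proof.
move=> m n; elim: n {-2}n (leqnn n) m => [|N IH] n n_le m m_le.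
  by have -> : m = 0 by lia.
rewrite opt_incr_unfold [opt_incr n]opt_incr_unfold.
case: n n_le m_le => [|n] n_le m_le; first by have -> : m = 0 by lia.
have := IH (n.+1 %/ 2) ltac:(lia) (m %/ 2) ltac:(lia); lia.
Qed.

(* The minimal cost of a tree with n leaves (Step 2). *)
Definition opt (n : nat) : nat := \sum_(k < n) opt_incr k.

(* The cost contributed by a child subtree with n leaves, including its own
   C(n, 2). *)
Definition opt_child (n : nat) : nat := 'C(n, 2) + opt n.

Lemma opt_childS n : opt_child n.+1 = opt_child n + (n + opt_incr n).
Proof. by rewrite /opt_child /opt big_ord_recr binS bin1 /=; lia. Qed.

(* opt_child has strictly increasing increments n + opt_incr n. *)
Lemma opt_child_convex a b : a < b ->
  opt_child a.+1 + opt_child b < opt_child a + opt_child b.+1.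
Proof. by move=> lt_ab; rewrite !opt_childS; have := opt_incr_mono (ltnW lt_ab); lia. Qed.

Lemma opt_split n : opt n = opt_child (n %/ 2) + opt_child (n.+1 %/ 2).
Proof.
elim: n => [|n IHn]; first by rewrite /opt_child /opt !big_ord0.
rewrite /opt big_ord_recr /= -/(opt n) IHn opt_incr_unfold.
have [m [-> | ->]] : exists m, n = m.*2 \/ n = m.*2.+1 by exists (n %/ 2); lia.
- have -> : m.*2 %/ 2 = m by lia.
  have -> : m.*2.+1 %/ 2 = m by lia.
  have -> : m.*2.+2 %/ 2 = m.+1 by lia.
  by rewrite opt_childS; lia.
- have -> : m.*2.+1 %/ 2 = m by lia.
  have -> : m.*2.+2 %/ 2 = m.+1 by lia.
  have -> : m.*2.+3 %/ 2 = m.+1 by lia.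
  by rewrite opt_childS; lia.
Qed.

Lemma negb_and4 (p q u v : bool) :
  ~~ [&& p, q, u & v] <= ~~ (p && q) + ~~ u + ~~ v.
Proof. by case: p; case: q; case: u; case: v. Qed.

Lemma cost_lower t : opt (kappa t) + ~~ max_balanced t <= cost t.
Proof.
elim: t => [k|l IHl r IHr]; first by rewrite /opt /kappa /= big_ord1.
rewrite kappa_node opt_split /=.
have split_le := balanced_split_le opt_child_convex (kappa l) (kappa r).
have := negb_and4 (kappa l <= (kappa r).+1) (kappa r <= (kappa l).+1)
  (max_balanced l) (max_balanced r).
move: split_le IHl IHr; rewrite /unbalanced /opt_child; lia.
Qed.

(* A maximally balanced tree has cost exactly opt (kappa t): both halves are
   the children's sizes, in some order. *)
Lemma cost_balanced t : max_balanced t -> cost t = opt (kappa t).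
Proof.
elim: t => [k|l IHl r IHr] /=; first by rewrite /opt /kappa /= big_ord1.
move=> /and4P[le_lr le_rl /IHl -> /IHr ->]; rewrite kappa_node [RHS]opt_split /opt_child.
have [[-> ->] | [-> ->]] :
    ((kappa l + kappa r) %/ 2 = kappa l /\ (kappa l + kappa r).+1 %/ 2 = kappa r) \/
    ((kappa l + kappa r) %/ 2 = kappa r /\ (kappa l + kappa r).+1 %/ 2 = kappa l).
  by lia.
all: lia.
Qed.

Fixpoint build (fuel : nat) (s : seq nat) : btree :=
  if fuel is fuel'.+1 then
    if size s <= 1 then Leaf (head 0 s)
    else Node (build fuel' (take (size s %/ 2) s)) (build fuel' (drop (size s %/ 2) s))
  else Leaf (head 0 s).

Lemma build_spec fuel s : 0 < size s <= fuel.+1 ->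
  leaves (build fuel s) = s /\ max_balanced (build fuel s).
Proof.
elim: fuel s => [|fuel IH] s /andP[s_gt0 s_le]; first by case: s s_gt0 s_le => [|x [|y s]].
rewrite /=; case: ifP => s_small; first by case: s s_gt0 s_small s_le => [|x [|y s]].
have size_take : size (take (size s %/ 2) s) = size s %/ 2 by rewrite size_takel //; lia.
have size_drop : size (drop (size s %/ 2) s) = size s - size s %/ 2 by rewrite size_drop.
have [leaves_l bal_l] := IH (take (size s %/ 2) s) ltac:(apply/andP; lia).
have [leaves_r bal_r] := IH (drop (size s %/ 2) s) ltac:(apply/andP; lia).
rewrite /= leaves_l leaves_r cat_take_drop /kappa leaves_l leaves_r.
by rewrite size_take size_drop bal_l bal_r !andbT; split=> //; apply/andP; split; lia.
Qed.

Lemma kappa_phylo n t : is_phylo n t -> kappa t = n.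
Proof. by move=> phylo_t; rewrite /kappa (perm_size phylo_t) size_iota. Qed.

Lemma Phi_lower n t : is_phylo n t -> opt n + ~~ max_balanced t <= Phi n t.
Proof.
by move=> phylo_t; rewrite Phi_cost // -(kappa_phylo phylo_t) cost_lower.
Qed.

Lemma Phi_balanced n t : is_phylo n t -> max_balanced t -> Phi n t = opt n.
Proof.
by move=> phylo_t bal_t; rewrite Phi_cost // cost_balanced // (kappa_phylo phylo_t).
Qed.

Lemma balanced_phylo_exists n : 0 < n -> exists2 t, is_phylo n t & max_balanced t.
Proof.
move=> n_gt0; have [leaves_t bal_t] := @build_spec n (iota 1 n) ltac:(rewrite size_iota; lia).
by exists (build n (iota 1 n)); rewrite // /is_phylo leaves_t.
Qed.

(* Phi(T) is minimal among phylogenetic trees with n leaves iff T is maximally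
   balanced: both directions compare with the common value opt n. *)
Theorem mainTheorem10 (n : nat) (T : btree) :
  is_phylo n T ->
  ((forall T' : btree, is_phylo n T' -> Phi n T <= Phi n T') <->
   max_balanced T).
Proof.
move=> phylo_T; split=> [T_min | bal_T T' phylo_T'].
- have n_gt0 : 0 < n by rewrite -(kappa_phylo phylo_T) kappa_gt0.
  have [B phylo_B bal_B] := balanced_phylo_exists n_gt0.
  have := T_min B phylo_B; rewrite (Phi_balanced phylo_B bal_B).
  by have := Phi_lower phylo_T; case: (max_balanced T) => //=; lia.
- by rewrite (Phi_balanced phylo_T bal_T); have := Phi_lower phylo_T'; lia.
Qed.
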